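(* Let $A,A'\in\mathbb{C}^{n\times n}$ with $\|A\|_F=\|A'\|_F=1$, $\lambda,\lambda'\in\mathbb{C}$ and $v\in\mathbb{C}^n$ nonzero. If $\mu(A,\lambda,v)\big(\|A'-A\|_F+|\lambda'-\lambda|\big)\le\varepsilon<1$, then $(1-\varepsilon)\mu(A,\lambda,v)\le\mu(A',\lambda',v)\le\frac{1}{1-\varepsilon}\mu(A,\lambda,v)$.
   Context: $\|\cdot\|_F$ is the Frobenius norm. For $v\ne0$, $T_v=v^\perp\subset\mathbb{C}^n$, $P_{v^\perp}$ the orthogonal projection onto $T_v$, $A_{\lambda,v}=P_{v^\perp}(A-\lambda\mathrm{Id})|_{T_v}$, and $\mu(A,\lambda,v)=\|A\|_F\|A_{\lambda,v}^{-1}\|$ (operator norm; $\infty$ if not invertible). No eigen-relation between $A,\lambda,v$ is assumed. *)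

From HB Require Import structures.
From mathcomp Require Import all_boot all_order all_algebra.
From mathcomp Require Import complex.
From mathcomp Require Import boolp classical_sets reals constructive_ereal ereal.
Set Implicit Arguments.
Unset Strict Implicit.
Unset Printing Implicit Defensive.
Import Order.TTheory GRing.Theory Num.Theory.
Local Open Scope ring_scope.
Local Open Scope classical_set_scope.

Section Defs.
Variables (R : realType) (n : nat).
Local Notation C := R[i].

Definition cmod (z : C) : R := Num.sqrt (complex.Re z ^+ 2 + complex.Im z ^+ 2).

Definition vnorm (w : 'cV[C]_n) : R := Num.sqrt (\sum_(i < n) cmod (w i 0) ^+ 2).

Definition frob (A : 'M[C]_n) : R :=
  Num.sqrt (\sum_(i < n) \sum_(j < n) cmod (A i j) ^+ 2).

Definition cdot (v w : 'cV[C]_n) : C := \sum_(i < n) conjc (v i 0) * w i 0.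

Definition Tv (v : 'cV[C]_n) : set 'cV[C]_n := [set w | cdot v w = 0].

Definition Pperp (v w : 'cV[C]_n) : 'cV[C]_n := w - (cdot v w / cdot v v) *: v.

(* A_{lambda,v} = P_{v^perp} (A - lambda Id), to be considered on T_v *)
Definition Alv (A : 'M[C]_n) (l : C) (v w : 'cV[C]_n) : 'cV[C]_n :=
  Pperp v ((A - l%:M) *m w).

Definition is_inv_Alv (A : 'M[C]_n) (l : C) (v : 'cV[C]_n)
    (B : 'cV[C]_n -> 'cV[C]_n) : Prop :=
  (forall y, Tv v y -> Tv v (B y) /\ Alv A l v (B y) = y) /\
  (forall w, Tv v w -> B (Alv A l v w) = w).

Definition opnorm_Tv (v : 'cV[C]_n) (B : 'cV[C]_n -> 'cV[C]_n) : R :=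
  sup [set vnorm (B y) | y in [set y | Tv v y /\ vnorm y <= 1]].

(* mu(A, lambda, v) = ||A||_F ||A_{lambda,v}^{-1}||, +oo if A_{lambda,v} is
   not invertible on T_v (the inverse is unique on T_v, so the set below is
   a singleton when it is nonempty; ereal_inf set0 = +oo). *)
Definition mu (A : 'M[C]_n) (l : C) (v : 'cV[C]_n) : \bar R :=
  ereal_inf [set ((frob A * opnorm_Tv v B)%:E)%E
            | B in [set B | is_inv_Alv A l v B]].

End Defs.

From HB Require Import structures.
From mathcomp Require Import all_boot all_order all_algebra.
From mathcomp Require Import complex.
From mathcomp Require Import boolp classical_sets reals constructive_ereal ereal.
From mathcomp Require Import ring lra.
Import Order.TTheory GRing.Theory Num.Theory.
Local Open Scope ring_scope.

(* Let K be the norm of the inverse of A_{l,v} on v^perp and d = ||A' - A||_F + |l' - l|.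
   Since P_{v^perp} is a contraction and the operator norm is at most the Frobenius norm,
   A_{l,v} and A'_{l',v} differ by at most d ||w|| at w, so on v^perp
   ||w|| <= K ||A'_{l',v} w|| + K d ||w||.  As K d <= eps < 1, A'_{l',v} is injective,
   hence invertible on v^perp with inverse of norm K' <= K / (1 - eps); the same estimate
   with the roles exchanged gives K <= K' (1 + eps).  With ||A||_F = ||A'||_F = 1 these
   norms are the two condition numbers.  If A_{l,v} is not invertible, mu = +oo and the
   hypothesis forces d = 0. *)

Section CauchySchwarz.
Context {R : rcfType} {n : nat}.
Implicit Types x y : 'I_n -> R.

Lemma CauchySchwarz_sum x y :
  (\sum_i x i * y i) ^+ 2 <= (\sum_i x i ^+ 2) * (\sum_i y i ^+ 2).
Proof.
have S_ge0 : 0 <= \sum_i \sum_j (x i * y j - x j * y i) ^+ 2.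
  by apply: sumr_ge0 => i _; apply: sumr_ge0 => j _; exact: sqr_ge0.
have lagrange : \sum_i \sum_j (x i * y j - x j * y i) ^+ 2 =
    \sum_i \sum_j x i ^+ 2 * y j ^+ 2 + \sum_i \sum_j y i ^+ 2 * x j ^+ 2
    - \sum_i \sum_j 2 * (x i * y i * (x j * y j)).
  rewrite -big_split -sumrB /=.
  by apply: eq_bigr => i _; rewrite -big_split -sumrB; apply: eq_bigr => j _ /=; ring.
have cross : \sum_i \sum_j 2 * (x i * y i * (x j * y j)) = 2 * (\sum_i x i * y i) ^+ 2.
  by rewrite expr2 big_distrlr mulr_sumr; apply: eq_bigr => i _; rewrite mulr_sumr.
rewrite lagrange cross -!big_distrlr /= [(\sum_i y i ^+ 2) * _]mulrC in S_ge0.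
lra.
Qed.

Lemma ler_sum_mul_sqrt x y :
  \sum_i x i * y i <= Num.sqrt (\sum_i x i ^+ 2) * Num.sqrt (\sum_i y i ^+ 2).
Proof.
rewrite -sqrtrM ?sumr_ge0 // => [|i _]; last exact: sqr_ge0.
apply: le_trans (ler_norm _) _; rewrite -sqrtr_sqr.
exact/ler_wsqrtr/CauchySchwarz_sum.
Qed.
End CauchySchwarz.

Local Open Scope complex_scope.

Section ComplexModulus.
Context {R : realType}.
Implicit Types z : R[i].

Lemma cmodE z : (cmod z)%:C = `|z|.
Proof. by rewrite normc_def. Qed.

Lemma cmod_ge0 z : 0 <= cmod z.
Proof. exact: sqrtr_ge0. Qed.

Lemma cmodD z1 z2 : cmod (z1 + z2) <= cmod z1 + cmod z2.
Proof. by rewrite -lecR rmorphD /= !cmodE ler_normD. Qed.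

Lemma cmodM z1 z2 : cmod (z1 * z2) = cmod z1 * cmod z2.
Proof. by apply: complexI; rewrite rmorphM /= !cmodE normrM. Qed.

Lemma cmodN z : cmod (- z) = cmod z.
Proof. by apply: complexI; rewrite !cmodE normrN. Qed.

Lemma cmod_distC z1 z2 : cmod (z1 - z2) = cmod (z2 - z1).
Proof. by rewrite -opprB cmodN. Qed.

Lemma cmod0 : cmod (0 : R[i]) = 0.
Proof. by apply: complexI; rewrite cmodE normr0. Qed.

Lemma cmod_eq0 z : cmod z = 0 -> z = 0.
Proof. by move=> z0; apply/normr0_eq0; rewrite -cmodE z0. Qed.

Lemma ger0_cmod (r : R) : 0 <= r -> cmod r%:C = r.
Proof. by move=> r0; apply: complexI; rewrite cmodE ger0_norm // ler0c. Qed.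

Lemma sqr_cmodE z : (cmod z ^+ 2)%:C = z * conjc z.
Proof.
case: z => a b; rewrite /cmod /= sqr_sqrtr ?addr_ge0 ?sqr_ge0 //.
by apply/eqP; rewrite eq_complex /=; apply/andP; split; apply/eqP; ring.
Qed.

Lemma ler_cmod_sum n (f : 'I_n -> R[i]) : cmod (\sum_i f i) <= \sum_i cmod (f i).
Proof.
elim/big_ind2: _ => [|z1 s1 z2 s2 le1 le2|//].
  by rewrite cmod0.
exact: le_trans (cmodD _ _) (lerD le1 le2).
Qed.

End ComplexModulus.

Section EuclideanNorms.
Context {R : realType} {n : nat}.
Local Notation C := R[i].
Implicit Types (w u : 'cV[C]_n) (X : 'M[C]_n).

Lemma vnorm_ge0 w : 0 <= vnorm w.
Proof. exact: sqrtr_ge0. Qed.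

Lemma vnorm_sqr w : vnorm w ^+ 2 = \sum_i cmod (w i 0) ^+ 2.
Proof. by rewrite sqr_sqrtr // sumr_ge0 // => i _; exact: sqr_ge0. Qed.

Lemma vnorm_eq0 w : vnorm w = 0 -> w = 0.
Proof.
move=> w0; have /psumr_eq0P w_i0 : \sum_i cmod (w i 0) ^+ 2 = 0.
  by rewrite -vnorm_sqr w0 expr0n.
apply/matrixP => i j; rewrite ord1 mxE; apply: cmod_eq0; apply/eqP.
by rewrite -sqrf_eq0 w_i0 // => k _; exact: sqr_ge0.
Qed.

Lemma vnormZ a w : vnorm (a *: w) = cmod a * vnorm w.
Proof.
rewrite /vnorm (eq_bigr (fun i => cmod a ^+ 2 * cmod (w i 0) ^+ 2)); last first.
  by move=> i _; rewrite mxE cmodM exprMn.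
by rewrite -big_distrr sqrtrM ?sqr_ge0 // sqrtr_sqr ger0_norm // cmod_ge0.
Qed.

Lemma vnorm0 : vnorm (0 : 'cV[C]_n) = 0.
Proof. by rewrite -(scale0r 0) vnormZ cmod0 mul0r. Qed.

Lemma vnormN w : vnorm (- w) = vnorm w.
Proof. by rewrite -scaleN1r vnormZ cmodN (@ger0_cmod _ 1) // mul1r. Qed.

Lemma ler_vnormD w u : vnorm (w + u) <= vnorm w + vnorm u.
Proof.
rewrite -ler_sqr ?nnegrE ?addr_ge0 ?vnorm_ge0 //.
have := ler_sum_mul_sqrt (fun i => cmod (w i 0)) (fun i => cmod (u i 0)).
rewrite -/(vnorm w) -/(vnorm u) => cs.
apply: le_trans (_ : \sum_i (cmod (w i 0) + cmod (u i 0)) ^+ 2 <= _).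
  rewrite vnorm_sqr; apply: ler_sum => i _; rewrite mxE.
  by rewrite ler_sqr ?nnegrE ?addr_ge0 ?cmod_ge0 // cmodD.
rewrite (eq_bigr (fun i => cmod (w i 0) ^+ 2 + cmod (u i 0) ^+ 2
                           + 2 * (cmod (w i 0) * cmod (u i 0)))); last first.
  by move=> i _; ring.
rewrite !big_split /= -mulr_sumr -!vnorm_sqr; nra.
Qed.

Lemma frob_ge0 X : 0 <= frob X.
Proof. exact: sqrtr_ge0. Qed.

Lemma frob_sqr X : frob X ^+ 2 = \sum_i \sum_j cmod (X i j) ^+ 2.
Proof.
by rewrite sqr_sqrtr // sumr_ge0 // => i _; apply: sumr_ge0 => j _; exact: sqr_ge0.
Qed.

Lemma frob_eq0 X : frob X = 0 -> X = 0.
Proof.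
move=> X0; have /psumr_eq0P X_i0 : \sum_i \sum_j cmod (X i j) ^+ 2 = 0.
  by rewrite -frob_sqr X0 expr0n.
apply/matrixP => i j; rewrite mxE; apply: cmod_eq0; apply/eqP.
have /psumr_eq0P X_ij0 : \sum_j cmod (X i j) ^+ 2 = 0.
  by apply: X_i0 => // k _; apply: sumr_ge0 => m _; exact: sqr_ge0.
by rewrite -sqrf_eq0 X_ij0 // => k _; exact: sqr_ge0.
Qed.

Lemma frobN X : frob (- X) = frob X.
Proof.
rewrite /frob; congr Num.sqrt; apply: eq_bigr => i _; apply: eq_bigr => j _.
by rewrite mxE cmodN.
Qed.

Lemma frob_distC X Y : frob (X - Y) = frob (Y - X).
Proof. by rewrite -opprB frobN. Qed.

Lemma ler_vnorm_mulmx X w : vnorm (X *m w) <= frob X * vnorm w.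
Proof.
rewrite -ler_sqr ?nnegrE ?mulr_ge0 ?vnorm_ge0 ?frob_ge0 //.
rewrite exprMn frob_sqr !vnorm_sqr big_distrl; apply: ler_sum => i _; rewrite mxE.
apply: le_trans (CauchySchwarz_sum (fun j => cmod (X i j)) (fun j => cmod (w j 0))).
rewrite ler_sqr ?nnegrE ?cmod_ge0 ?sumr_ge0 // => [|j _]; last first.
  by rewrite mulr_ge0 ?cmod_ge0.
by apply: le_trans (ler_cmod_sum _ _) _; apply: ler_sum => j _; rewrite cmodM.
Qed.

End EuclideanNorms.

Section InnerProduct.
Context {R : realType} {n : nat}.
Local Notation C := R[i].
Implicit Types (v w u : 'cV[C]_n) (a : C).

Lemma cdotDr v w u : cdot v (w + u) = cdot v w + cdot v u.
Proof. by rewrite /cdot -big_split; apply: eq_bigr => i _; rewrite mxE mulrDr. Qed.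

Lemma cdotZr v a w : cdot v (a *: w) = a * cdot v w.
Proof. by rewrite /cdot mulr_sumr; apply: eq_bigr => i _; rewrite mxE mulrCA. Qed.

Lemma cdot0r v : cdot v 0 = 0.
Proof. by rewrite -(scale0r 0) cdotZr mul0r. Qed.

Lemma cdotBr v w u : cdot v (w - u) = cdot v w - cdot v u.
Proof. by rewrite cdotDr -scaleN1r cdotZr mulN1r. Qed.

Lemma conj_cdot v w : conjc (cdot v w) = cdot w v.
Proof.
rewrite /cdot rmorph_sum; apply: eq_bigr => i _.
by rewrite rmorphM /= conjcK mulrC.
Qed.

Lemma cdotZl v a w : cdot (a *: w) v = conjc a * cdot w v.
Proof. by rewrite -conj_cdot cdotZr rmorphM /= !conj_cdot. Qed.

Lemma cdotBl v w u : cdot (w - u) v = cdot w v - cdot u v.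
Proof. by rewrite -conj_cdot cdotBr rmorphB /= !conj_cdot. Qed.

Lemma cdotii w : cdot w w = (vnorm w ^+ 2)%:C.
Proof.
rewrite vnorm_sqr rmorph_sum; apply: eq_bigr => i _.
by rewrite mulrC -sqr_cmodE.
Qed.

End InnerProduct.

Section Projection.
Context {R : realType} {n : nat} {v : 'cV[R[i]]_n}.
Hypothesis v_neq0 : v != 0.
Implicit Types (w u : 'cV[R[i]]_n) (A : 'M[R[i]]_n) (l : R[i]).

Lemma Tv0 : Tv v 0.
Proof. exact: cdot0r. Qed.

Lemma cdotii_neq0 : cdot v v != 0.
Proof.
rewrite cdotii; apply: contra v_neq0 => /eqP[/eqP].
by rewrite sqrf_eq0 => /eqP/vnorm_eq0 ->.
Qed.

Lemma Tv_Pperp w : Tv v (Pperp v w).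
Proof. by rewrite /Tv /Pperp /= cdotBr cdotZr divfK ?subrr // cdotii_neq0. Qed.

Lemma Pperp_id w : Tv v w -> Pperp v w = w.
Proof. by rewrite /Pperp => ->; rewrite mul0r scale0r subr0. Qed.

Lemma PperpB w u : Pperp v (w - u) = Pperp v w - Pperp v u.
Proof. by rewrite /Pperp cdotBr; apply/matrixP => i j; rewrite !mxE; ring. Qed.

Lemma ler_vnorm_Pperp w : vnorm (Pperp v w) <= vnorm w.
Proof.
rewrite -ler_sqr ?nnegrE ?vnorm_ge0 // -lecR -!cdotii.
set a := cdot v w; set s := cdot v v.
have s_real : conjc s = s by rewrite /s conj_cdot.
(* Pythagoras: the component of [w] along [v] has squared length [a a^* / s]. *)
have -> : cdot (Pperp v w) (Pperp v w) = cdot w w - a * conjc a / s.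
  rewrite /Pperp cdotBl !cdotBr !cdotZl !cdotZr -/a -/s -(conj_cdot v w) -/a.
  by rewrite rmorphM /= fmorphV /= s_real; field; exact: cdotii_neq0.
rewrite lerBlDr lerDl mulr_ge0 ?mulcJ_ge0 // invr_ge0 /s cdotii ler0c.
exact: sqr_ge0.
Qed.

Lemma Tv_Alv A l w : Tv v (Alv A l v w).
Proof. exact: Tv_Pperp. Qed.

Lemma ler_vnorm_Alv A l A' l' w :
  vnorm (Alv A' l' v w) <= vnorm (Alv A l v w) + (frob (A' - A) + cmod (l' - l)) * vnorm w.
Proof.
rewrite -[Alv A' l' v w](subrK (Alv A l v w)) addrC.
apply: le_trans (ler_vnormD _ _) _; rewrite lerD2l /Alv -PperpB.
apply: le_trans (ler_vnorm_Pperp _) _.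
have -> : (A' - l'%:M) *m w - (A - l%:M) *m w = (A' - A) *m w - (l' - l) *: w.
  by rewrite !mulmxBl !mul_scalar_mx scalerBl opprD addrACA -opprD.
apply: le_trans (ler_vnormD _ _) _.
by rewrite vnormN vnormZ mulrDl lerD2r ler_vnorm_mulmx.
Qed.

Lemma Alv0 A l : Alv A l v 0 = 0.
Proof. by rewrite /Alv mulmx0 (Pperp_id _ Tv0). Qed.

Definition proj_line_mx : 'M[R[i]]_n :=
  (cdot v v)^-1 *: (v *m \row_j conjc (v j 0)).

Lemma proj_line_mxE w : proj_line_mx *m w = (cdot v w / cdot v v) *: v.
Proof.
rewrite /proj_line_mx -scalemxAl -mulmxA.
have -> : \row_j conjc (v j 0) *m w = (cdot v w)%:M.
  apply/matrixP => i j; rewrite !ord1 !mxE eqxx mulr1n.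
  by apply: eq_bigr => k _; rewrite mxE.
by rewrite mul_mx_scalar scalerA mulrC.
Qed.

(* [Alv_mx A l] acts as [A_{l,v}] on [v^perp] and as the identity on the line of
   [v], so it is invertible exactly when [A_{l,v}] is injective on [v^perp]. *)
Definition Alv_mx A l : 'M[R[i]]_n :=
  (1%:M - proj_line_mx) *m (A - l%:M) *m (1%:M - proj_line_mx) + proj_line_mx.

Lemma Alv_mxE A l w :
  Alv_mx A l *m w = Alv A l v (Pperp v w) + (cdot v w / cdot v v) *: v.
Proof.
have P_E u : (1%:M - proj_line_mx) *m u = Pperp v u.
  by rewrite mulmxBl mul1mx proj_line_mxE.
by rewrite /Alv_mx mulmxDl proj_line_mxE -!mulmxA !P_E.
Qed.

Lemma cdot_Alv_mx A l w : cdot v (Alv_mx A l *m w) = cdot v w.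
Proof.
by rewrite Alv_mxE cdotDr Tv_Alv add0r cdotZr divfK // cdotii_neq0.
Qed.

Lemma Alv_mx_Tv A l w : Tv v w -> Alv_mx A l *m w = Alv A l v w.
Proof. by move=> wTv; rewrite Alv_mxE wTv mul0r scale0r addr0 Pperp_id. Qed.

Lemma is_inv_Alv_mx {A l} :
  (forall w, Tv v w -> Alv A l v w = 0 -> w = 0) ->
  exists N : 'M[R[i]]_n, is_inv_Alv A l v (mulmx N).
Proof.
move=> Alv_inj; pose M := Alv_mx A l.
have M_unit : M \in unitmx.
  rewrite unitmxE unitfE -det_tr; apply/negP => /det0P[r r_neq0 rM0].
  have Mr0 : M *m r^T = 0 by rewrite -[M]trmxK -trmx_mul rM0 trmx0.
  have wTv : Tv v r^T by rewrite /Tv /= -(cdot_Alv_mx A l) Mr0 cdot0r.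
  have rT0 : r^T = 0 by apply: (Alv_inj _ wTv); rewrite -Alv_mx_Tv.
  by rewrite -[r]trmxK rT0 trmx0 eqxx in r_neq0.
exists (invmx M); split => [y yTv | w wTv].
  have MN : M *m (invmx M *m y) = y by rewrite mulmxA mulmxV // mul1mx.
  have NyTv : Tv v (invmx M *m y) by rewrite /Tv /= -(cdot_Alv_mx A l) MN.
  by split; rewrite // -Alv_mx_Tv.
by rewrite -Alv_mx_Tv // mulmxA mulVmx // mul1mx.
Qed.

Lemma is_inv_Alv_inj {A l B} : is_inv_Alv A l v B ->
  forall w, Tv v w -> Alv A l v w = 0 -> w = 0.
Proof.
move=> [B_Tv BK] w wTv Aw0.
by rewrite -(BK w wTv) Aw0 -{1}(Alv0 A l) (BK 0 Tv0).
Qed.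

Lemma has_sup_opnorm_Tv (N : 'M[R[i]]_n) :
  has_sup [set vnorm (N *m y) | y in [set y | Tv v y /\ vnorm y <= 1]].
Proof.
split.
  by exists 0, 0; rewrite ?mulmx0 ?vnorm0 //; split; [exact: Tv0 | rewrite vnorm0].
exists (frob N) => _ [y [_ y_le1] <-].
by apply: le_trans (ler_vnorm_mulmx N y) _; rewrite ler_piMr ?frob_ge0.
Qed.

Lemma opnorm_Tv_ge0 (N : 'M[R[i]]_n) : 0 <= opnorm_Tv v (mulmx N).
Proof.
apply: (sup_upper_bound (has_sup_opnorm_Tv N)); exists 0; last by rewrite mulmx0 vnorm0.
by split; [exact: Tv0 | rewrite vnorm0].
Qed.

Lemma ler_vnorm_opnorm_Tv (N : 'M[R[i]]_n) y :
  Tv v y -> vnorm (N *m y) <= opnorm_Tv v (mulmx N) * vnorm y.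
Proof.
move=> yTv; have [->|y_neq0] := eqVneq y 0; first by rewrite mulmx0 vnorm0 mulr0.
have y_gt0 : 0 < vnorm y.
  by rewrite lt_def vnorm_ge0 andbT; apply: contra y_neq0 => /eqP/vnorm_eq0 ->.
set r := (vnorm y)^-1; have r_ge0 : 0 <= r by rewrite invr_ge0 ltW.
have ry_ball : Tv v (r%:C *: y) /\ vnorm (r%:C *: y) <= 1.
  by rewrite /Tv /= cdotZr yTv mulr0 vnormZ ger0_cmod // mulVf ?gt_eqF.
have := sup_upper_bound (has_sup_opnorm_Tv N) (ex_intro2 _ _ _ ry_ball erefl).
by rewrite -scalemxAr vnormZ ger0_cmod // -ler_pdivrMr // mulrC.
Qed.

Lemma opnorm_Tv_le (N : 'M[R[i]]_n) c : 0 <= c ->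
  (forall y, Tv v y -> vnorm (N *m y) <= c * vnorm y) -> opnorm_Tv v (mulmx N) <= c.
Proof.
move=> c_ge0 Nc; apply: ge_sup; first by case: (has_sup_opnorm_Tv N).
move=> _ [y [yTv y_le1] <-]; apply: le_trans (Nc y yTv) _.
by rewrite ler_piMr.
Qed.

Lemma opnorm_Tv_inv_eq {A l B1 B2} :
  is_inv_Alv A l v B1 -> is_inv_Alv A l v B2 -> opnorm_Tv v B1 = opnorm_Tv v B2.
Proof.
move=> [B1_Tv _] [_ B2K]; rewrite /opnorm_Tv; congr sup; apply/seteqP.
have B12 y : Tv v y -> B1 y = B2 y.
  by move=> yTv; have [B1yTv B1K] := B1_Tv y yTv; rewrite -{2}B1K B2K.
by split=> _ [y [yTv y_le1] <-]; exists y; rewrite ?B12.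
Qed.

Lemma mu_mx {A l N} : is_inv_Alv A l v (mulmx N) ->
  mu A l v = (frob A * opnorm_Tv v (mulmx N))%:E.
Proof.
move=> NA; rewrite /mu -[RHS]ereal_inf1; congr ereal_inf; apply/seteqP.
split=> [_ [B BA <-]|_ ->]; last by exists (mulmx N).
by rewrite /= (opnorm_Tv_inv_eq BA NA).
Qed.

Lemma mu_pinfty {A l} : ~ (exists B, is_inv_Alv A l v B) -> mu A l v = +oo%E.
Proof.
move=> no_inv; rewrite /mu -ereal_inf0; congr ereal_inf; apply/seteqP.
by split=> // x [B BA _]; case: no_inv; exists B.
Qed.

Lemma ler_vnorm_inv_Alv {A l N w} : is_inv_Alv A l v (mulmx N) -> Tv v w ->
  vnorm w <= opnorm_Tv v (mulmx N) * vnorm (Alv A l v w).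
Proof.
by move=> [_ NK] wTv; rewrite -{1}(NK w wTv); apply: ler_vnorm_opnorm_Tv; exact: Tv_Alv.
Qed.

Lemma opnorm_inv_Alv_le {A l N c} : is_inv_Alv A l v (mulmx N) -> 0 <= c ->
  (forall w, Tv v w -> vnorm w <= c * vnorm (Alv A l v w)) ->
  opnorm_Tv v (mulmx N) <= c.
Proof.
move=> [N_Tv _] c_ge0 Ac; apply: opnorm_Tv_le => // y yTv.
by have [NyTv {2}<-] := N_Tv y yTv; exact: Ac.
Qed.

Section Perturbation.
Context {A A' : 'M[R[i]]_n} {l l' : R[i]} {N : 'M[R[i]]_n} {eps : R}.
Hypothesis NA : is_inv_Alv A l v (mulmx N).
Local Notation K := (opnorm_Tv v (mulmx N)).
Local Notation d := (frob (A' - A) + cmod (l' - l)).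
Hypothesis Kd_le : K * d <= eps.
Hypothesis eps_lt1 : eps < 1.

Lemma d_ge0 : 0 <= d.
Proof. by rewrite addr_ge0 ?frob_ge0 ?cmod_ge0. Qed.

Lemma ler_vnorm_perturbed {w} : Tv v w -> (1 - eps) * vnorm w <= K * vnorm (Alv A' l' v w).
Proof.
move=> wTv; have w_le := ler_vnorm_inv_Alv NA wTv.
have Aw_le : K * vnorm (Alv A l v w) <= K * vnorm (Alv A' l' v w) + K * d * vnorm w.
  rewrite -mulrA -mulrDr; apply: (ler_wpM2l (opnorm_Tv_ge0 N)).
  by have := ler_vnorm_Alv A' l' A l w; rewrite frob_distC cmod_distC.
rewrite mulrBl mul1r lerBlDr; apply: le_trans w_le (le_trans Aw_le _).
by rewrite lerD2l; exact: (ler_wpM2r (vnorm_ge0 w) Kd_le).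
Qed.

Lemma perturbed_Alv_inj w : Tv v w -> Alv A' l' v w = 0 -> w = 0.
Proof.
move=> wTv Aw0; have := ler_vnorm_perturbed wTv; rewrite Aw0 vnorm0 mulr0 => le0.
apply: vnorm_eq0; apply/eqP; rewrite eq_le vnorm_ge0 andbT.
have eps1_gt0 : 0 < 1 - eps by rewrite subr_gt0.
by rewrite -(pmulr_rle0 _ eps1_gt0).
Qed.

Context {N' : 'M[R[i]]_n}.
Hypothesis NA' : is_inv_Alv A' l' v (mulmx N').
Local Notation K' := (opnorm_Tv v (mulmx N')).

Lemma opnorm_perturbed_le : K' <= (1 - eps)^-1 * K.
Proof.
have eps1_gt0 : 0 < 1 - eps by rewrite subr_gt0.
have inv_ge0 : 0 <= (1 - eps)^-1 by rewrite invr_ge0 ltW.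
apply: (opnorm_inv_Alv_le NA'); first exact: mulr_ge0 inv_ge0 (opnorm_Tv_ge0 N).
move=> w wTv; rewrite -mulrA ler_pdivlMl; last exact: eps1_gt0.
exact: ler_vnorm_perturbed.
Qed.

Lemma opnorm_perturbed_ge : (1 - eps) * K <= K'.
Proof.
have K'_ge0 := opnorm_Tv_ge0 N'; have K_ge0 := opnorm_Tv_ge0 N.
have eps_ge0 : 0 <= eps by apply: le_trans Kd_le; rewrite mulr_ge0 ?d_ge0.
suff K_le : K <= K' * (1 + eps).
  apply: le_trans (_ : (1 - eps) * (K' * (1 + eps)) <= _).
    by apply: (ler_wpM2l _ K_le); rewrite subr_ge0 ltW.
  rewrite mulrCA; apply: ler_piMr K'_ge0 _.
  by rewrite -subr_sqr expr1n gerBl sqr_ge0.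
apply: (opnorm_inv_Alv_le NA); first exact: mulr_ge0 K'_ge0 (addr_ge0 ler01 eps_ge0).
move=> w wTv; apply: le_trans (ler_vnorm_inv_Alv NA' wTv) _.
rewrite -mulrA; apply: (ler_wpM2l K'_ge0).
rewrite mulrDl mul1r; apply: le_trans (ler_vnorm_Alv A l A' l' w) _; rewrite lerD2l.
apply: le_trans (_ : d * (K * vnorm (Alv A l v w)) <= _).
  exact: (ler_wpM2l d_ge0 (ler_vnorm_inv_Alv NA wTv)).
by rewrite mulrA [d * K]mulrC; exact: (ler_wpM2r (vnorm_ge0 _) Kd_le).
Qed.

End Perturbation.

End Projection.

Lemma mulye_le_fin_eq0 {R : realType} {x y : R} :
  0 <= x -> (+oo * x%:E <= y%:E)%E -> x = 0.
Proof.
move=> x_ge0; have [x_gt0|x_le0] := ltP 0 x.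
  by rewrite gt0_mulye ?lte_fin // leNgt ltey.
by move=> _; apply/eqP; rewrite eq_le x_le0.
Qed.

Theorem lemma4p3 (R : realType) (n : nat) (A A' : 'M[R[i]]_n) (l l' : R[i])
    (v : 'cV[R[i]]_n) (eps : R) :
  frob A = 1 -> frob A' = 1 -> v != 0 ->
  (mu A l v * (frob (A' - A) + cmod (l' - l))%:E <= eps%:E)%E -> eps < 1 ->
  (((1 - eps)%:E * mu A l v <= mu A' l' v)%E /\
   (mu A' l' v <= ((1 - eps)^-1)%:E * mu A l v)%E).
Proof.
move=> A1 A'1 v_neq0 mu_le eps_lt1.
have [[B BA]|no_inv] := pselect (exists B, is_inv_Alv A l v B); last first.
  have muA := mu_pinfty no_inv; rewrite muA in mu_le *.
  have /eqP := mulye_le_fin_eq0 d_ge0 mu_le.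
  rewrite paddr_eq0 ?frob_ge0 ?cmod_ge0 // => /andP[/eqP/frob_eq0/subr0_eq->].
  move=> /eqP/cmod_eq0/subr0_eq->.
  by rewrite muA leey gt0_muley ?lte_fin ?invr_gt0 ?subr_gt0.
have [N NA] := is_inv_Alv_mx v_neq0 (is_inv_Alv_inj BA).
rewrite (mu_mx NA) A1 mul1r -EFinM lee_fin in mu_le *.
have [N' NA'] := is_inv_Alv_mx v_neq0 (perturbed_Alv_inj v_neq0 NA mu_le eps_lt1).
rewrite (mu_mx NA') A'1 mul1r -!EFinM !lee_fin.
split; first exact: (opnorm_perturbed_ge v_neq0 NA mu_le eps_lt1 NA').
exact: (opnorm_perturbed_le v_neq0 NA mu_le eps_lt1 NA').
Qed.
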